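(* Suppose $0\le\alpha_3\le\alpha_2\le\alpha_1\le\pi/4$, and define $\zeta_0=\cos\alpha_1\cos\alpha_2\cos\alpha_3-\mathrm{i}\sin\alpha_1\sin\alpha_2\sin\alpha_3$, $\zeta_1=\cos\alpha_1\sin\alpha_2\sin\alpha_3-\mathrm{i}\sin\alpha_1\cos\alpha_2\cos\alpha_3$, $\zeta_2=\sin\alpha_1\cos\alpha_2\sin\alpha_3-\mathrm{i}\cos\alpha_1\sin\alpha_2\cos\alpha_3$, $\zeta_3=\sin\alpha_1\sin\alpha_2\cos\alpha_3-\mathrm{i}\cos\alpha_1\cos\alpha_2\sin\alpha_3$. Then $|\zeta_0|\ge|\zeta_1|\ge|\zeta_2|\ge|\zeta_3|\ge0$. The first inequality is an equality iff $\alpha_1=\pi/4$; the second iff $\alpha_2=\alpha_1$; the third iff $\alpha_1=\pi/4$ or $\alpha_3=\alpha_2$; the last iff $\alpha_2=\alpha_3=0$.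
   Context: The numbers $|\zeta_0|,|\zeta_1|,|\zeta_2|,|\zeta_3|$ are the Schmidt coefficients of the two-qubit unitary $U(\alpha_1,\alpha_2,\alpha_3)=\exp[-\mathrm{i}\sum_{k=1}^3\alpha_k\sigma_k\otimes\sigma_k]=\sum_{k=0}^3\zeta_k\sigma_k\otimes\sigma_k$ ($\sigma_0=I$, $\sigma_k$ Pauli matrices), i.e. of its Choi state with respect to the bipartition $AA'|BB'$. *)

From Stdlib Require Import Reals.
From Coquelicot Require Import Coquelicot.
Open Scope R_scope.

Definition zeta0 (a1 a2 a3 : R) : C :=
  (cos a1 * cos a2 * cos a3, - (sin a1 * sin a2 * sin a3)).
Definition zeta1 (a1 a2 a3 : R) : C :=
  (cos a1 * sin a2 * sin a3, - (sin a1 * cos a2 * cos a3)).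
Definition zeta2 (a1 a2 a3 : R) : C :=
  (sin a1 * cos a2 * sin a3, - (cos a1 * sin a2 * cos a3)).
Definition zeta3 (a1 a2 a3 : R) : C :=
  (sin a1 * sin a2 * cos a3, - (cos a1 * cos a2 * sin a3)).

(** The squared moduli of consecutive Schmidt coefficients differ by products
    of trigonometric factors,
      |ζ0|² - |ζ1|² = cos 2α1 · cos(α2+α3) cos(α2-α3),
      |ζ1|² - |ζ2|² = cos 2α3 · sin(α1-α2) sin(α1+α2),
      |ζ2|² - |ζ3|² = cos 2α1 · sin(α2-α3) sin(α2+α3),
    each factor of which is nonnegative on the Weyl chamber
    0 ≤ α3 ≤ α2 ≤ α1 ≤ π/4; the equality cases are read off from the
    vanishing of the factors. *)

From Stdlib Require Import Reals Lra.
From Coquelicot Require Import Coquelicot.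
Open Scope R_scope.

Lemma Cmod_le_eq_of_sqr_gap (z w : C) (g : R) (P : Prop) :
  Cmod w ^ 2 - Cmod z ^ 2 = g -> 0 <= g -> (g = 0 <-> P) ->
  Cmod z <= Cmod w /\ (Cmod w = Cmod z <-> P).
Proof.
  intros Hg g_ge0 [g0P Pg0].
  pose proof (Cmod_ge_0 z); pose proof (Cmod_ge_0 w).
  split; [nra|split].
  - intro E; apply g0P; rewrite <- Hg, E; ring.
  - intro HP; specialize (Pg0 HP); nra.
Qed.

Lemma Cmod2_zeta0_sub_zeta1 (a1 a2 a3 : R) :
  Cmod (zeta0 a1 a2 a3) ^ 2 - Cmod (zeta1 a1 a2 a3) ^ 2
  = cos (2 * a1) * (cos (a2 + a3) * cos (a2 - a3)).
Proof.
  rewrite !Cmod2_alt, cos_2a, cos_plus, cos_minus.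
  unfold zeta0, zeta1; simpl; ring.
Qed.

Lemma Cmod2_zeta1_sub_zeta2 (a1 a2 a3 : R) :
  Cmod (zeta1 a1 a2 a3) ^ 2 - Cmod (zeta2 a1 a2 a3) ^ 2
  = cos (2 * a3) * (sin (a1 - a2) * sin (a1 + a2)).
Proof.
  rewrite !Cmod2_alt, cos_2a, sin_plus, sin_minus.
  unfold zeta1, zeta2; simpl; ring.
Qed.

Lemma Cmod2_zeta2_sub_zeta3 (a1 a2 a3 : R) :
  Cmod (zeta2 a1 a2 a3) ^ 2 - Cmod (zeta3 a1 a2 a3) ^ 2
  = cos (2 * a1) * (sin (a2 - a3) * sin (a2 + a3)).
Proof.
  rewrite !Cmod2_alt, cos_2a, sin_plus, sin_minus.
  unfold zeta2, zeta3; simpl; ring.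
Qed.

Lemma cos_eq0_le_PI2 (x : R) : 0 <= x <= PI / 2 -> cos x = 0 -> x = PI / 2.
Proof.
  intros Hx E; destruct (Req_dec x (PI / 2)) as [|Hne]; [assumption|].
  assert (0 < cos x) by (apply cos_gt_0; pose proof PI_RGT_0; lra); lra.
Qed.

Lemma sin_eq0_lt_PI (x : R) : 0 <= x < PI -> sin x = 0 -> x = 0.
Proof.
  intros Hx E; destruct (Req_dec x 0) as [|Hne]; [assumption|].
  assert (0 < sin x) by (apply sin_gt_0; lra); lra.
Qed.

Lemma cos_double_ge0 (x : R) : 0 <= x <= PI / 4 -> 0 <= cos (2 * x).
Proof. intro; apply cos_ge_0; lra. Qed.

Lemma cos_double_eq0 (x : R) : 0 <= x <= PI / 4 -> cos (2 * x) = 0 -> x = PI / 4.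
Proof. intros Hx E; apply cos_eq0_le_PI2 in E; lra. Qed.

Lemma cos_double_PI4 : cos (2 * (PI / 4)) = 0.
Proof. replace (2 * (PI / 4)) with (PI / 2) by field; exact cos_PI2. Qed.

Section WeylChamber.

Variables a1 a2 a3 : R.
Hypotheses (a3_ge0 : 0 <= a3) (a32 : a3 <= a2) (a21 : a2 <= a1)
  (a1_le : a1 <= PI / 4).

Let PI_gt0 := PI_RGT_0.

Lemma Cmod_zeta1_leif_zeta0 :
  Cmod (zeta1 a1 a2 a3) <= Cmod (zeta0 a1 a2 a3) /\
  (Cmod (zeta0 a1 a2 a3) = Cmod (zeta1 a1 a2 a3) <-> a1 = PI / 4).
Proof.
  assert (0 < cos (a2 - a3)) by (apply cos_gt_0; lra).
  assert (0 <= cos (a2 + a3)) by (apply cos_ge_0; lra).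
  assert (0 <= cos (2 * a1)) by (apply cos_double_ge0; lra).
  apply (Cmod_le_eq_of_sqr_gap _ _ _ _ (Cmod2_zeta0_sub_zeta1 a1 a2 a3)).
  - apply Rmult_le_pos; [lra | apply Rmult_le_pos; lra].
  - split.
    + intro E; apply Rmult_integral in E as [E | E].
      * apply cos_double_eq0 in E; lra.
      * apply Rmult_integral in E as [E | E]; [| lra].
        (* α2 + α3 = π/2 forces α1 = α2 = α3 = π/4 *)
        apply cos_eq0_le_PI2 in E; lra.
    + intros ->; rewrite cos_double_PI4; ring.
Qed.

Lemma Cmod_zeta2_leif_zeta1 :
  Cmod (zeta2 a1 a2 a3) <= Cmod (zeta1 a1 a2 a3) /\
  (Cmod (zeta1 a1 a2 a3) = Cmod (zeta2 a1 a2 a3) <-> a2 = a1).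
Proof.
  assert (0 <= sin (a1 - a2)) by (apply sin_ge_0; lra).
  assert (0 <= sin (a1 + a2)) by (apply sin_ge_0; lra).
  assert (0 <= cos (2 * a3)) by (apply cos_double_ge0; lra).
  apply (Cmod_le_eq_of_sqr_gap _ _ _ _ (Cmod2_zeta1_sub_zeta2 a1 a2 a3)).
  - apply Rmult_le_pos; [lra | apply Rmult_le_pos; lra].
  - split.
    + intro E; apply Rmult_integral in E as [E | E].
      * apply cos_double_eq0 in E; lra.
      * apply Rmult_integral in E as [E | E]; apply sin_eq0_lt_PI in E; lra.
    + intros ->; replace (a1 - a1) with 0 by ring; rewrite sin_0; ring.
Qed.

Lemma Cmod_zeta3_leif_zeta2 :
  Cmod (zeta3 a1 a2 a3) <= Cmod (zeta2 a1 a2 a3) /\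
  (Cmod (zeta2 a1 a2 a3) = Cmod (zeta3 a1 a2 a3) <-> a1 = PI / 4 \/ a3 = a2).
Proof.
  assert (0 <= sin (a2 - a3)) by (apply sin_ge_0; lra).
  assert (0 <= sin (a2 + a3)) by (apply sin_ge_0; lra).
  assert (0 <= cos (2 * a1)) by (apply cos_double_ge0; lra).
  apply (Cmod_le_eq_of_sqr_gap _ _ _ _ (Cmod2_zeta2_sub_zeta3 a1 a2 a3)).
  - apply Rmult_le_pos; [lra | apply Rmult_le_pos; lra].
  - split.
    + intro E; apply Rmult_integral in E as [E | E].
      * left; apply cos_double_eq0 in E; lra.
      * right; apply Rmult_integral in E as [E | E]; apply sin_eq0_lt_PI in E; lra.
    + intros [-> | ->].
      * rewrite cos_double_PI4; ring.
      * replace (a2 - a2) with 0 by ring; rewrite sin_0; ring.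
Qed.

Lemma Cmod_zeta3_eq0 : Cmod (zeta3 a1 a2 a3) = 0 <-> a2 = 0 /\ a3 = 0.
Proof.
  assert (0 < cos a1) by (apply cos_gt_0; lra).
  assert (0 < cos a2) by (apply cos_gt_0; lra).
  split.
  - intro E; apply Cmod_eq_0 in E; unfold zeta3 in E.
    injection E as Ere Eim.
    assert (a3 = 0) as ->.
    { apply sin_eq0_lt_PI; [lra |].
      apply Ropp_eq_0_compat in Eim; rewrite Ropp_involutive in Eim.
      apply Rmult_integral in Eim as [E' | E']; [nra | exact E']. }
    rewrite cos_0, Rmult_1_r in Ere.
    split; [| reflexivity].
    apply Rmult_integral in Ere as [E' | E']; apply sin_eq0_lt_PI in E'; lra.
  - intros [-> ->]; unfold zeta3; rewrite sin_0.
    replace (sin a1 * 0 * cos 0, - (cos a1 * cos 0 * 0)) with (0 : C)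
      by (apply injective_projections; simpl; ring).
    exact Cmod_0.
Qed.

End WeylChamber.

Theorem lemma8 (a1 a2 a3 : R) :
  0 <= a3 -> a3 <= a2 -> a2 <= a1 -> a1 <= PI / 4 ->
  Cmod (zeta1 a1 a2 a3) <= Cmod (zeta0 a1 a2 a3) /\
  Cmod (zeta2 a1 a2 a3) <= Cmod (zeta1 a1 a2 a3) /\
  Cmod (zeta3 a1 a2 a3) <= Cmod (zeta2 a1 a2 a3) /\
  0 <= Cmod (zeta3 a1 a2 a3) /\
  (Cmod (zeta0 a1 a2 a3) = Cmod (zeta1 a1 a2 a3) <-> a1 = PI / 4) /\
  (Cmod (zeta1 a1 a2 a3) = Cmod (zeta2 a1 a2 a3) <-> a2 = a1) /\
  (Cmod (zeta2 a1 a2 a3) = Cmod (zeta3 a1 a2 a3) <-> (a1 = PI / 4 \/ a3 = a2)) /\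
  (Cmod (zeta3 a1 a2 a3) = 0 <-> (a2 = 0 /\ a3 = 0)).
Proof.
  intros a3_ge0 a32 a21 a1_le.
  destruct (Cmod_zeta1_leif_zeta0 a1 a2 a3) as [le01 eq01]; try assumption.
  destruct (Cmod_zeta2_leif_zeta1 a1 a2 a3) as [le12 eq12]; try assumption.
  destruct (Cmod_zeta3_leif_zeta2 a1 a2 a3) as [le23 eq23]; try assumption.
  refine (conj le01 (conj le12 (conj le23 (conj (Cmod_ge_0 _)
    (conj eq01 (conj eq12 (conj eq23 _))))))).
  apply Cmod_zeta3_eq0; assumption.
Qed.
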